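(* Let $G\in\mathcal S$, with $b_r$ defined either for (bond-)interfaces or for site-interfaces. Then $r\mapsto b_r(G)$ is an upper-semicontinuous function of $r$.
   Context: Interfaces. Let $G$ be an infinite, connected, locally finite, 1-ended, 2-connected graph with a vertex $o$ and a fixed basis $\mathcal P$ of its cycle space over $\mathbb Z_2$. Each edge $vw$ has directions $\vec{vw},\vec{wv}$; for $F\subseteq E(G)$ and subgraph $D$, $\vec F_D=\{\vec{vz}: vz\in F, z\in V(D)\}$. A $\mathcal P$-path connecting $\vec{vw},\vec{yx}$ is a path $Q$ with endvertices $w,y$ (possibly $w=y$) such that the path with edge set $E(Q)\cup\{vw,yx\}$ is a subpath of a cycle in $\mathcal P$; it connects an edge $e$ to a set $J$ if it connects a direction of $e$ to an element of $J$. $J$ is $F$-connected if for every partition into non-empty $J_1,J_2$ some $\mathcal P$-path in $G\setminus F$ connects an element of $J_1$ to one of $J_2$. An interface is a pair $(P,\partial P)$ of edge sets with: (i) $\partial P$ separates $o$ from infinity; (ii) a unique finite component $D$ of $G\setminus\partial P$ contains an endvertex of each edge of $\partial P$; (iii) $\vec{\partial P}_D$ is $\partial P$-connected; (iv) $P$ is the set of $e\in E(D)$ connected to $\vec{\partial P}_D$ by a $\mathcal P$-path in $G\setminus\partial P$. Sizes count edges. It is a site-interface if no edge of $\partial P$ has both endvertices in $V(P)$; then $P$ is identified with $V(P)$ and $\partial P$ with the vertices incident with an edge of $\partial P$ but no edge of $P$, and sizes count vertices. The class $\mathcal S$ (with fixed $\mathcal P$): (a) quasi-transitive planar lattices (2-connected,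 locally finite, connected graphs embedded in $\mathbb R^2$ preserved by translations by two linearly independent vectors, with finitely many vertex orbits), $\mathcal P$ = face-boundary cycles; (b) $\mathbb Z^d$, $d\ge2$, $\mathcal P$ = 4-cycles bounding square faces of unit cubes; (c) $\mathbb T^d$, $d\ge2$: $\mathbb Z^d$ plus edges $xy$ with $y_i-x_i=1$ for exactly two coordinates and $y_i=x_i$ otherwise, $\mathcal P$ = resulting triangles. $c_{n,r,\epsilon}$ is the number of (bond- resp. site-) interfaces of $o$ with $|P|=n$ and $(r-\epsilon)n\le|\partial P|\le(r+\epsilon)n$; $b_r=\lim_{\epsilon\to0}\limsup_{n\to\infty}c_{n,r,\epsilon}^{1/n}$. *)

From HB Require Import structures.
From mathcomp Require Import all_boot all_order all_algebra.
From mathcomp Require Import all_classical all_reals all_analysis.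
From Stdlib Require Import Relation_Operators.
From Stdlib Require List.

Set Implicit Arguments.
Unset Strict Implicit.
Unset Printing Implicit Defensive.

Import Order.TTheory GRing.Theory Num.Theory numFieldNormedType.Exports.
Local Open Scope classical_set_scope.
Local Open Scope ring_scope.

(* Graphs.  A (simple) graph is a vertex type [V] with a symmetric,         *)
(* irreflexive adjacency relation [adj].  An (undirected) edge vw is the    *)
(* two-element vertex set [set v; w]; an edge set is a [set (set V)].        *)
(* A direction of the edge vw is an ordered pair (v, w) (tail, head).        *)

Definition edge (V : Type) (v w : V) : set V := [set v; w].

Definition is_edge (V : Type) (adj : V -> V -> Prop) : set (set V) :=
  [set e | exists v w, adj v w /\ e = edge v w].

Definition del (V : Type) (adj : V -> V -> Prop) (F : set (set V)) : V -> V -> Prop :=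
  fun v w => adj v w /\ ~ F (edge v w).

Fixpoint walk (V : Type) (a : V -> V -> Prop) (s : seq V) : Prop :=
  match s with
  | x :: ((y :: _) as t) => a x y /\ walk a t
  | _ => True
  end.

Fixpoint pedges (V : Type) (s : seq V) : set (set V) :=
  match s with
  | x :: ((y :: _) as t) => [set edge x y] `|` pedges t
  | _ => set0
  end.

Definition comp (V : Type) (a : V -> V -> Prop) (x : V) : set V :=
  [set y | clos_refl_trans V a x y].

Definition is_component (V : Type) (a : V -> V -> Prop) (D : set V) : Prop :=
  exists x, D = comp a x.

Definition is_cycle (V : Type) (adj : V -> V -> Prop) (C : set (set V)) : Prop :=
  exists (x : V) (t : seq V), (2 <= size t)%N /\ List.NoDup (x :: t) /\
    walk adj (x :: rcons t x) /\ C = pedges (x :: rcons t x).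

(* P-paths.  [Pc] is the fixed set of cycles (basis of the cycle space).     *)
(* [Ppath_conn adj Pc F d1 d2]: there is a P-path in G \ F connecting the   *)
(* directions d1 = (v, w) and d2 = (x, y): a path Q in G \ F from w to y     *)
(* such that v, Q, x is a path whose edge set (E(Q) + vw + yx) is contained *)
(* in some cycle of Pc.  (Both directions point towards the ends of Q, see  *)

Definition Ppath_conn (V : Type) (adj : V -> V -> Prop) (Pc : set (set (set V)))
    (F : set (set V)) (d1 d2 : V * V) : Prop :=
  exists Q' : seq V,
    let Q := d1.2 :: Q' in
    [/\ last d1.2 Q' = d2.2,
        walk (del adj F) Q,
        walk adj (d1.1 :: rcons Q d2.1),
        List.NoDup (d1.1 :: rcons Q d2.1) &
        exists2 C, Pc C & pedges (d1.1 :: rcons Q d2.1) `<=` C].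

Definition Fconnected (V : Type) (adj : V -> V -> Prop) (Pc : set (set (set V)))
    (F : set (set V)) (J : set (V * V)) : Prop :=
  forall J1 J2 : set (V * V),
    J1 `|` J2 = J -> J1 `&` J2 = set0 -> J1 !=set0 -> J2 !=set0 ->
    exists d1 d2, [/\ J1 d1, J2 d2 & Ppath_conn adj Pc F d1 d2].

Definition dirs_into (V : Type) (F : set (set V)) (D : set V) : set (V * V) :=
  [set d | F (edge d.1 d.2) /\ D d.2].

Definition edges_of (V : Type) (a : V -> V -> Prop) (D : set V) : set (set V) :=
  [set e | exists v w, [/\ a v w, D v, D w & e = edge v w]].

Definition meets_all (V : Type) (adj : V -> V -> Prop) (dP : set (set V)) (D : set V) :=
  [/\ is_component (del adj dP) D, finite_set D & forall e, dP e -> e `&` D !=set0].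

Definition is_interface (V : Type) (adj : V -> V -> Prop) (Pc : set (set (set V)))
    (o : V) (P dP : set (set V)) : Prop :=
  [/\ dP `<=` is_edge adj,
      (* (i) dP separates o from infinity *)
      finite_set (comp (del adj dP) o) &
      exists D : set V,
        [/\
            meets_all adj dP D,
            (forall D', meets_all adj dP D' -> D' = D),
            Fconnected adj Pc dP (dirs_into dP D) &
            P = [set e | edges_of (del adj dP) D e /\
                   exists v w d, [/\ e = edge v w, dirs_into dP D d &
                                     Ppath_conn adj Pc dP (v, w) d]]]].

Definition verts (V : Type) (F : set (set V)) : set V :=
  [set v | exists2 e, F e & e v].

Definition site_cond (V : Type) (P dP : set (set V)) : Prop :=
  forall e, dP e -> ~ (e `<=` verts P).

Definition vbound (V : Type) (P dP : set (set V)) : set V :=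
  verts dP `\` verts P.

Definition ecount (R : realType) (T : Type) (A : set T) : \bar R :=
  (\esum_(x in (A : set {classic T})) (1 : \bar R))%E.
Arguments ecount R {T} A.

Definition c_bond (R : realType) (V : Type) (adj : V -> V -> Prop)
    (Pc : set (set (set V))) (o : V) (n : nat) (r eps : R) : \bar R :=
  ecount R [set PP : set (set V) * set (set V) |
    [/\ is_interface adj Pc o PP.1 PP.2,
        ecount R PP.1 = (n%:R)%:E,
        (((r - eps) * n%:R)%:E <= ecount R PP.2)%E &
        (ecount R PP.2 <= ((r + eps) * n%:R)%:E)%E]].

(* c_{n,r,eps} for site-interfaces, identified with the pair (V(P), dP_V) *)
Definition c_site (R : realType) (V : Type) (adj : V -> V -> Prop)
    (Pc : set (set (set V))) (o : V) (n : nat) (r eps : R) : \bar R :=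
  ecount R [set SS : set V * set V |
    [/\ (exists P dP, [/\ is_interface adj Pc o P dP, site_cond P dP &
                          SS = (verts P, vbound P dP)]),
        ecount R SS.1 = (n%:R)%:E,
        (((r - eps) * n%:R)%:E <= ecount R SS.2)%E &
        (ecount R SS.2 <= ((r + eps) * n%:R)%:E)%E]].

Definition b_of (R : realType) (c : nat -> R -> R -> \bar R) (r : R) : \bar R :=
  lim ((fun eps : R => limn_esup (fun n : nat => poweR (c n r eps) (n%:R)^-1))
         @ 0^'+).

Definition b_bond (R : realType) (V : Type) (adj : V -> V -> Prop)
    (Pc : set (set (set V))) (o : V) : R -> \bar R :=
  b_of (c_bond adj Pc o).

Definition b_site (R : realType) (V : Type) (adj : V -> V -> Prop)
    (Pc : set (set (set V))) (o : V) : R -> \bar R :=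
  b_of (c_site adj Pc o).

Definition upper_semicontinuous (R : realType) (f : R -> \bar R) : Prop :=
  forall (x : R) (a : R), (f x < a%:E)%E -> \forall y \near x, (f y < a%:E)%E.

Definition addp (R : realType) (p q : R * R) : R * R := (p.1 + q.1, p.2 + q.2).

Definition unit01 (R : realType) : set R := [set t | 0 <= t <= 1].
Arguments unit01 : clear implicits.

Definition arc_img (R : realType) (g : R -> R * R) : set (R * R) := g @` (unit01 R).

Definition planar_lattice (R : realType) (V : Type) (adj : V -> V -> Prop)
    (Pc : set (set (set V))) : Prop :=
  [/\ (forall v w, adj v w -> adj w v) /\ (forall v, ~ adj v v),
      (forall x y, clos_refl_trans V adj x y),
      (forall v, finite_set (adj v)),
      (exists x y z : V, [/\ x <> y, y <> z & x <> z]) /\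
      (forall z x y, x <> z -> y <> z ->
         clos_refl_trans V (fun a b => [/\ adj a b, a <> z & b <> z]) x y) &
      (* embedded in R^2, preserved by two independent translations,     *)
      (* finitely many vertex orbits, Pc = the face-boundary cycles       *)
      exists (pos : V -> R * R) (arc : V -> V -> R -> R * R),
      let Gimg := pos @` setT `|`
                  [set p | exists v w, adj v w /\ arc_img (arc v w) p] in
      injective pos /\
          (forall v w, adj v w ->
             [/\ {within unit01 R, continuous (arc v w)},
                 set_inj (unit01 R) (arc v w),
                 arc v w 0 = pos v, arc v w 1 = pos w &
                 arc_img (arc v w) = arc_img (arc w v)]) /\
          (forall v w t u, adj v w -> 0 < t < 1 -> arc v w t <> pos u) /\
          (forall v w v' w', adj v w -> adj v' w' -> edge v w <> edge v' w' ->
             arc_img (arc v w) `&` arc_img (arc v' w') `<=`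
               pos @` (edge v w `&` edge v' w')) /\
          (exists (a b : R * R) (pa pb : V -> V),
             [/\ a.1 * b.2 - a.2 * b.1 != 0,
                 (forall (c : R * R) (p : V -> V), (c, p) = (a, pa) \/ (c, p) = (b, pb) ->
                    [/\ bijective p,
                        (forall v w, adj v w <-> adj (p v) (p w)),
                        (forall v, pos (p v) = addp (pos v) c) &
                        (forall v w, adj v w ->
                           arc_img (arc (p v) (p w)) = (fun q => addp q c) @` arc_img (arc v w))]) &
                 exists L : seq V, forall v, exists u, List.In u L /\
                   exists i j : int,
                     pos v = addp (pos u) (i%:~R * a.1 + j%:~R * b.1,
                                           i%:~R * a.2 + j%:~R * b.2)]) /\
          Pc = [set C | is_cycle adj C /\
                  exists x, ~ Gimg x /\
                    let Fc := connected_component (~` Gimg) x in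
                    closure Fc `\` interior Fc =
                    [set p | exists v w, [/\ adj v w, C (edge v w) &
                                             arc_img (arc v w) p]]]].

Definition zvec (d : nat) := 'I_d -> int.
Definition zunit (d : nat) (i : 'I_d) : zvec d := fun k => if k == i then 1 else 0.
Definition zadd (d : nat) (x y : zvec d) : zvec d := fun k => x k + y k.

Definition adjZ (d : nat) (x y : zvec d) : Prop :=
  exists i : 'I_d, (y i - x i = 1 \/ x i - y i = 1) /\ forall k, k != i -> y k = x k.

Definition cycZ (d : nat) : set (set (set (zvec d))) :=
  [set C | exists (x : zvec d) (i j : 'I_d), i != j /\
     let a := zadd x (zunit i) in
     let b := zadd x (zunit j) in
     let c := zadd a (zunit j) in
     C = [set edge x a; edge a c; edge c b; edge b x]].
Arguments cycZ : clear implicits.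

Definition adjT (d : nat) (x y : zvec d) : Prop :=
  adjZ x y \/
  exists i j : 'I_d, i != j /\
    ((y i - x i = 1 /\ y j - x j = 1 /\ forall k, k != i -> k != j -> y k = x k) \/
     (x i - y i = 1 /\ x j - y j = 1 /\ forall k, k != i -> k != j -> x k = y k)).

Definition cycT (d : nat) : set (set (set (zvec d))) :=
  [set C | exists (x : zvec d) (i j : 'I_d), i != j /\
     let a := zadd x (zunit i) in
     let c := zadd a (zunit j) in
     C = [set edge x a; edge a c; edge x c]].
Arguments cycT : clear implicits.

Record pgraph := PGraph {
  vtx : Type;
  gadj : vtx -> vtx -> Prop;
  gcyc : set (set (set vtx)) }.

Definition ZdG (d : nat) : pgraph := @PGraph (zvec d) (@adjZ d) (cycZ d).
Definition TdG (d : nat) : pgraph := @PGraph (zvec d) (@adjT d) (cycT d).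

Definition inS (R : realType) (G : pgraph) : Prop :=
  planar_lattice R (@gadj G) (@gcyc G) \/
  (exists d, (2 <= d)%N /\ G = ZdG d) \/
  (exists d, (2 <= d)%N /\ G = TdG d).
Arguments b_bond : clear implicits.
Arguments b_site : clear implicits.

(* The window [(r' - eps) n, (r' + eps) n] contains the window of half-width
   eps' around r as soon as |r - r'| + eps' <= eps, so c_{n,r,eps'} <=
   c_{n,r',eps}, and the same holds for the growth rates
   limsup_n c_{n,r,eps}^(1/n).  With r = r' the growth rate is nondecreasing
   in eps, so b_r is its infimum over eps in ]0, 1[.  If b_r < a, some growth
   rate at (r, eps) is below a, and it bounds the growth rate at (r', eps/2),
   hence b_r', for every r' within eps/2 of r. *)

From mathcomp Require Import all_boot all_order all_algebra.
From mathcomp Require Import all_classical all_reals all_analysis.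
From mathcomp Require Import lra.
Import Order.TTheory GRing.Theory Num.Theory numFieldNormedType.Exports.
Local Open Scope classical_set_scope.
Local Open Scope ring_scope.

Section Counting.
Context {R : realType}.

Lemma ecount_ge0 (T : Type) (A : set T) : (0 <= ecount R A)%E.
Proof. exact: esum_ge0. Qed.

Lemma le_ecount (T : Type) (A B : set T) :
  A `<=` B -> (ecount R A <= ecount R B)%E.
Proof.
move=> AB; rewrite /ecount -(setIidr AB) esum_mkcondr.
by apply: le_esum => i _; case: ifP.
Qed.

Lemma le_limn_esup (u v : (\bar R)^nat) :
  (forall n, (u n <= v n)%E) -> (limn_esup u <= limn_esup v)%E.
Proof.
move=> uv; rewrite !limn_esup_lim.
apply: lee_lim; [exact: is_cvg_esups | exact: is_cvg_esups |].
apply: nearW => n /=; apply: ge_ereal_sup => _ [k kn <-].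
by apply: le_trans (uv k) _; apply: ereal_sup_ubound; exists k.
Qed.

Definition window_monotone (c : nat -> R -> R -> \bar R) : Prop :=
  forall n r r' e e', `|r - r'| + e <= e' -> (c n r e <= c n r' e')%E.

Definition window_count {T1 T2 : Type} (A : set (set T1 * set T2))
    (n : nat) (r e : R) : \bar R :=
  ecount R [set x | [/\ A x, ecount R x.1 = (n%:R)%:E,
    (((r - e) * n%:R)%:E <= ecount R x.2)%E &
    (ecount R x.2 <= ((r + e) * n%:R)%:E)%E]].

Lemma window_count_monotone {T1 T2 : Type} (A : set (set T1 * set T2)) :
  window_monotone (window_count A).
Proof.
move=> n r r' e e' le_e.
have le_dist : r - r' <= `|r - r'| := ler_norm _.
have le_dist' : r' - r <= `|r - r'| by rewrite distrC ler_norm.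
apply: le_ecount => x [Ax x1 lo hi]; split => //.
- by apply: le_trans lo; rewrite lee_fin ler_wpM2r //; lra.
- by apply: le_trans hi _; rewrite lee_fin ler_wpM2r //; lra.
Qed.

End Counting.

Section GrowthRate.
Variables (R : realType) (c : nat -> R -> R -> \bar R).
Hypothesis c_ge0 : forall n r e, (0 <= c n r e)%E.
Hypothesis c_mono : window_monotone c.

Definition growth_rate (r e : R) : \bar R :=
  limn_esup (fun n : nat => poweR (c n r e) (n%:R)^-1).

Lemma le_growth_rate (r r' e e' : R) :
  `|r - r'| + e <= e' -> (growth_rate r e <= growth_rate r' e')%E.
Proof.
move=> le_e; apply: le_limn_esup => n.
apply: gt0_ler_poweR; rewrite ?invr_ge0 //; last exact: c_mono.
- by rewrite in_itv /= c_ge0 leey.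
- by rewrite in_itv /= c_ge0 leey.
Qed.

Lemma b_ofE (r : R) :
  b_of c r = ereal_inf (growth_rate r @` [set` `]0, 1[]).
Proof.
apply: cvg_lim => //; apply: nondecreasing_at_right_cvge; first by rewrite bnd_simp.
move=> e e' _ _ le_e; apply: le_growth_rate.
by rewrite subrr normr0 add0r.
Qed.

Lemma b_of_usc : upper_semicontinuous (b_of c).
Proof.
move=> r a; rewrite b_ofE => /ereal_inf_lt [g [e]].
rewrite /= in_itv /= => /andP[e_gt0 e_lt1] <- {g} lt_a.
have e2_gt0 : 0 < e / 2 by rewrite divr_gt0.
apply/nbhs_ballP; exists (e / 2) => // r' /=; rewrite /ball /= => near_r'.
rewrite b_ofE; apply: le_lt_trans lt_a.
apply: (@le_trans _ _ (growth_rate r' (e / 2))).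
  apply: ereal_inf_lbound; exists (e / 2) => //=.
  by rewrite in_itv /= e2_gt0 /=; lra.
by apply: le_growth_rate; rewrite distrC; lra.
Qed.

End GrowthRate.

Theorem proposition6p2 (R : realType) (G : pgraph) (o : vtx G) :
  inS R G ->
  upper_semicontinuous (b_bond R (vtx G) (@gadj G) (@gcyc G) o) /\
  upper_semicontinuous (b_site R (vtx G) (@gadj G) (@gcyc G) o).
Proof.
move=> _; split.
- apply: b_of_usc => [n r e|]; first exact: ecount_ge0.
  exact: window_count_monotone.
- apply: b_of_usc => [n r e|]; first exact: ecount_ge0.
  exact: window_count_monotone.
Qed.
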